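(* Let $n,d$ be integers with $3\le d\le n-2$. Define for $x\ge d$ $$\phi(x)=\frac{2^{-(n-d+1)}\,n!}{(d-3)!\,(n-d+1)!}\int_0^d z^{d-3}(d-z)(x-z)^{n-d+1}\,dz,\qquad \Phi(x)=\frac{2^{-(n-d+1)}\,n!}{(d-3)!\,(n-d+2)!}\int_0^d z^{d-3}(d-z)(x-z)^{n-d+2}\,dz.$$ Then $\Phi(2n-d+2)>2\phi(2n-d+2)$.
   Context: Here $\Phi(x)=\int_0^x\phi(t)\,dt$ where $\phi$ on $[0,d]$ is $2^{-(n-d+1)}x^{n-1}(dn-(d-2)x)$; the displayed formulas are the values for $x\ge d$, and $2n-d+2>d$. *)

From Stdlib Require Import Reals Lra Lia Factorial.
From Coquelicot Require Import Coquelicot.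
Open Scope R_scope.

(* phi(x) = 2^{-(n-d+1)} n! / ((d-3)! (n-d+1)!) * \int_0^d z^{d-3} (d-z) (x-z)^{n-d+1} dz
   (formula valid for x >= d). Natural subtractions are exact under 3 <= d <= n-2. *)
Definition phi (n d : nat) (x : R) : R :=
  / 2 ^ (n - d + 1) * INR (fact n) / (INR (fact (d - 3)) * INR (fact (n - d + 1)))
  * RInt (fun z => z ^ (d - 3) * (INR d - z) * (x - z) ^ (n - d + 1)) 0 (INR d).

Definition Phi (n d : nat) (x : R) : R :=
  / 2 ^ (n - d + 1) * INR (fact n) / (INR (fact (d - 3)) * INR (fact (n - d + 2)))
  * RInt (fun z => z ^ (d - 3) * (INR d - z) * (x - z) ^ (n - d + 2)) 0 (INR d).

(** Put [k = d - 3], [m = n - d + 1], [a = d = k + 3] and [x = a + 2 m = 2n - d + 2], and write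
    [I_j = \int_0^a z^k (a - z) (x - z)^j dz].  Up to a positive factor, [Phi x - 2 phi x] is
    [I_(m+1) - 2 (m + 1) I_m = \int_0^a w(z) (x - z)^m dz] with [w(z) = z^k (a - z) (k + 1 - z)],
    because [x - z - 2 (m + 1) = k + 1 - z].  The weight [w] has vanishing integral, and it is
    nonnegative before [k + 1] and negative after, while [(x - z)^m] decreases; hence
    [w(z) (x - z)^m >= w(z) (x - k - 1)^m] pointwise, strictly on [(k + 1, a)], and integrating
    gives [\int_0^a w(z) (x - z)^m dz > (x - k - 1)^m \int_0^a w = 0]. *)

From Stdlib Require Import Reals Factorial Lra Lia.
From Coquelicot Require Import Coquelicot.
Open Scope R_scope.

Lemma pow_lt_compat_l (p q : R) (m : nat) :
  0 <= p -> p < q -> (0 < m)%nat -> p ^ m < q ^ m.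
Proof.
  intros Hp Hpq Hm. destruct m as [|m]; [lia|]. simpl.
  assert (p ^ m <= q ^ m) by (apply pow_incr; lra).
  assert (0 < q ^ m) by (apply pow_lt; lra).
  nra.
Qed.

Lemma RInt_sign_change_gt (w g : R -> R) (c b : R) :
  0 <= c < b ->
  (forall z, continuous w z) -> (forall z, continuous g z) ->
  (forall z, 0 < z < c -> 0 <= w z /\ g c <= g z) ->
  (forall z, c < z < b -> w z < 0 /\ g z < g c) ->
  g c * RInt w 0 b < RInt (fun z => w z * g z) 0 b.
Proof.
  intros Hcb Hw Hg Hleft Hright.
  assert (Hwc : forall z, continuous (fun z => g c * w z) z).
  { intros z. apply (continuous_scal_r (K := R_AbsRing) (g c) w), Hw. }
  assert (Hwg : forall z, continuous (fun z => w z * g z) z).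
  { intros z. apply (continuous_mult w g); auto. }
  assert (ex_lhs : forall u v, ex_RInt (fun z => g c * w z) u v).
  { intros u v. apply (ex_RInt_continuous (V := R_CompleteNormedModule)); auto. }
  assert (ex_rhs : forall u v, ex_RInt (fun z => w z * g z) u v).
  { intros u v. apply (ex_RInt_continuous (V := R_CompleteNormedModule)); auto. }
  rewrite <- (RInt_scal (V := R_CompleteNormedModule))
    by (apply (ex_RInt_continuous (V := R_CompleteNormedModule)); auto).
  change (RInt (fun z => g c * w z) 0 b < RInt (fun z => w z * g z) 0 b).
  rewrite <- (RInt_Chasles (V := R_CompleteNormedModule) _ 0 c b) by auto.
  rewrite <- (RInt_Chasles (V := R_CompleteNormedModule) (fun z => w z * g z) 0 c b) by auto.
  apply Rplus_le_lt_compat.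
  - apply RInt_le; auto; [lra|].
    intros z Hz. destruct (Hleft z Hz). nra.
  - apply RInt_lt; auto; [lra|].
    intros z Hz. destruct (Hright z Hz). nra.
Qed.

Definition weight (k : nat) (z : R) : R := z ^ k * (INR k + 3 - z) * (INR k + 1 - z).

Lemma continuous_weight (k : nat) (z : R) : continuous (weight k) z.
Proof. apply (ex_derive_continuous (weight k)). unfold weight. auto_derive. auto. Qed.

Lemma RInt_weight (k : nat) : RInt (weight k) 0 (INR k + 3) = 0.
Proof.
  assert (Hk : 0 <= INR k) by apply pos_INR.
  set (a := INR k + 3).
  pose (F := fun z => a * (a - 2) * z ^ (S k) / (INR k + 1)
                    - (2 * a - 2) * z ^ (S (S k)) / (INR k + 2)
                    + z ^ (S (S (S k))) / (INR k + 3)).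
  assert (HF : is_RInt (weight k) 0 a (minus (F a) (F 0))).
  { apply (is_RInt_derive F).
    - intros z _. unfold F, weight. auto_derive; [repeat split; lra|].
      change (match k with 0%nat => 1 | S _ => INR k + 1 end) with (INR (S k)).
      rewrite S_INR. unfold a. simpl pow. field. lra.
    - intros z _. apply continuous_weight. }
  rewrite (is_RInt_unique _ _ _ _ HF).
  unfold F, minus, plus, opp, a; simpl. field. lra.
Qed.

Definition moment (k j : nat) (x : R) : R :=
  RInt (fun z => z ^ k * (INR k + 3 - z) * (x - z) ^ j) 0 (INR k + 3).

Lemma ex_RInt_moment_integrand (k j : nat) (x u v : R) :
  ex_RInt (fun z => z ^ k * (INR k + 3 - z) * (x - z) ^ j) u v.
Proof.
  apply (ex_RInt_continuous (V := R_CompleteNormedModule)).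
  intros z _.
  apply (ex_derive_continuous (fun z => z ^ k * (INR k + 3 - z) * (x - z) ^ j)).
  auto_derive. auto.
Qed.

Lemma moment_gap_eq (k m : nat) :
  let x := INR k + 3 + 2 * INR m in
  moment k (S m) x - 2 * (INR m + 1) * moment k m x =
  RInt (fun z => weight k z * (x - z) ^ m) 0 (INR k + 3).
Proof.
  intros x. unfold moment.
  rewrite <- (RInt_scal (V := R_CompleteNormedModule)) by apply ex_RInt_moment_integrand.
  rewrite <- (RInt_minus (V := R_CompleteNormedModule));
    [| apply ex_RInt_moment_integrand
     | apply (ex_RInt_scal (V := R_CompleteNormedModule)), ex_RInt_moment_integrand].
  apply RInt_ext. intros z _.
  unfold weight, x, minus, plus, opp, scal; simpl; unfold mult; simpl. ring.
Qed.

Lemma moment_gap_pos (k m : nat) : (0 < m)%nat ->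
  let x := INR k + 3 + 2 * INR m in
  2 * (INR m + 1) * moment k m x < moment k (S m) x.
Proof.
  intros Hm x.
  assert (Hk : 0 <= INR k) by apply pos_INR.
  assert (Hm1 : 1 <= INR m) by (apply (le_INR 1); lia).
  apply Rminus_gt. rewrite moment_gap_eq. fold x.
  apply Rle_lt_trans with ((x - (INR k + 1)) ^ m * RInt (weight k) 0 (INR k + 3));
    [rewrite RInt_weight; lra|].
  apply (RInt_sign_change_gt (weight k) (fun z => (x - z) ^ m)).
  - lra.
  - apply continuous_weight.
  - intros z. apply (ex_derive_continuous (fun z => (x - z) ^ m)). auto_derive. auto.
  - intros z Hz. unfold weight. split.
    + assert (0 <= z ^ k) by (apply pow_le; lra).
      apply Rmult_le_pos; [apply Rmult_le_pos|]; lra.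
    + apply pow_incr. unfold x. lra.
  - intros z Hz. unfold weight. split.
    + assert (0 < z ^ k) by (apply pow_lt; lra).
      assert (0 < z ^ k * (INR k + 3 - z)) by (apply Rmult_lt_0_compat; lra).
      nra.
    + apply pow_lt_compat_l; [unfold x; lra | lra | exact Hm].
Qed.

Theorem lemma4p12 (n d : nat) (hd : (3 <= d)%nat) (hdn : (d <= n - 2)%nat) :
  Phi n d (2 * INR n - INR d + 2) > 2 * phi n d (2 * INR n - INR d + 2).
Proof.
  unfold Phi, phi.
  set (k := (d - 3)%nat). set (m := (n - d + 1)%nat).
  assert (Hd : INR d = INR k + 3).
  { replace d with (k + 3)%nat at 1 by lia. rewrite plus_INR. simpl. ring. }
  assert (Hx : 2 * INR n - INR d + 2 = INR k + 3 + 2 * INR m).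
  { replace n with (k + m + 2)%nat at 1 by lia. rewrite Hd, !plus_INR. simpl. ring. }
  assert (Hm2 : (n - d + 2 = S m)%nat) by lia.
  rewrite Hm2, Hx, Hd.
  fold (moment k (S m) (INR k + 3 + 2 * INR m)) (moment k m (INR k + 3 + 2 * INR m)).
  pose proof (moment_gap_pos k m ltac:(lia)) as Hgap.
  rewrite fact_simpl, mult_INR, S_INR.
  assert (0 < / 2 ^ m) by (apply Rinv_0_lt_compat, pow_lt; lra).
  assert (0 < INR (fact n)) by apply INR_fact_lt_0.
  assert (0 < INR (fact k)) by apply INR_fact_lt_0.
  assert (0 < INR (fact m)) by apply INR_fact_lt_0.
  assert (0 <= INR m) by apply pos_INR.
  set (C := / 2 ^ m * INR (fact n) / (INR (fact k) * INR (fact m))).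
  assert (HC : 0 < C) by (unfold C; apply Rmult_lt_0_compat; [nra|]; apply Rinv_0_lt_compat; nra).
  apply Rminus_gt.
  match goal with |- ?L - ?R > 0 =>
    replace (L - R) with (C / (INR m + 1) * (moment k (S m) (INR k + 3 + 2 * INR m)
                            - 2 * (INR m + 1) * moment k m (INR k + 3 + 2 * INR m)))
      by (unfold C; field; repeat split; try lra; apply pow_nonzero; lra) end.
  apply Rmult_lt_0_compat; [apply Rdiv_lt_0_compat|]; lra.
Qed.
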